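(* Let $d_0,d_1$ be metrics on $\omega$. Then the completions of $\langle\omega,d_0\rangle$ and $\langle\omega,d_1\rangle$ are homeomorphic if and only if there are metrics $d'_0,d'_1$ on $\omega$ such that $d_e\preceq_{\mathrm{di}}d'_e$ for each $e\in\{0,1\}$ and there is a Cauchy-continuous bijection $g:\langle\omega,d'_0\rangle\to\langle\omega,d'_1\rangle$ whose inverse is Cauchy-continuous.
   Context: For metrics $d,d'$ on $\omega$, $d\preceq_{\mathrm{di}}d'$ means there is a dense isometry $\iota:\langle\omega,d\rangle\to\langle\omega,d'\rangle$, i.e. a distance-preserving map (not necessarily onto) with dense image. A function between metric spaces is Cauchy-continuous if it maps Cauchy sequences to Cauchy sequences. The completion of a metric space is a complete metric space together with a dense isometry from the space into it. *)

From Stdlib Require Export Reals.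
Open Scope R_scope.

Definition is_metric {X : Type} (d : X -> X -> R) : Prop :=
  (forall x y, 0 <= d x y) /\
  (forall x y, d x y = 0 <-> x = y) /\
  (forall x y, d x y = d y x) /\
  (forall x y z, d x z <= d x y + d y z).

Definition cauchy_seq {X : Type} (d : X -> X -> R) (u : nat -> X) : Prop :=
  forall eps, 0 < eps -> exists N, forall m n, (N <= m)%nat -> (N <= n)%nat ->
    d (u m) (u n) < eps.

Definition seq_converges {X : Type} (d : X -> X -> R) (u : nat -> X) (x : X) : Prop :=
  forall eps, 0 < eps -> exists N, forall n, (N <= n)%nat -> d (u n) x < eps.

Definition complete_metric {X : Type} (d : X -> X -> R) : Prop :=
  forall u, cauchy_seq d u -> exists x, seq_converges d u x.

Definition isometry {A B : Type} (dA : A -> A -> R) (dB : B -> B -> R) (f : A -> B) : Prop :=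
  forall x y, dB (f x) (f y) = dA x y.

Definition dense_image {A B : Type} (dB : B -> B -> R) (f : A -> B) : Prop :=
  forall y eps, 0 < eps -> exists x, dB (f x) y < eps.

Definition dense_isometry {A B : Type} (dA : A -> A -> R) (dB : B -> B -> R) (f : A -> B) : Prop :=
  isometry dA dB f /\ dense_image dB f.

Definition di_le (d d' : nat -> nat -> R) : Prop :=
  exists iota : nat -> nat, dense_isometry d d' iota.

Definition cauchy_continuous {A B : Type} (dA : A -> A -> R) (dB : B -> B -> R) (f : A -> B) : Prop :=
  forall u, cauchy_seq dA u -> cauchy_seq dB (fun n => f (u n)).

Definition is_completion {A X : Type} (dA : A -> A -> R) (dX : X -> X -> R) (iota : A -> X) : Prop :=
  is_metric dX /\ complete_metric dX /\ dense_isometry dA dX iota.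

Definition metric_continuous {A B : Type} (dA : A -> A -> R) (dB : B -> B -> R) (f : A -> B) : Prop :=
  forall x eps, 0 < eps -> exists delta, 0 < delta /\
    forall y, dA x y < delta -> dB (f x) (f y) < eps.

Definition homeomorphic {A B : Type} (dA : A -> A -> R) (dB : B -> B -> R) : Prop :=
  exists (f : A -> B) (g : B -> A),
    (forall x, g (f x) = x) /\ (forall y, f (g y) = y) /\
    metric_continuous dA dB f /\ metric_continuous dB dA g.

(** A completion of [(ω, d)] is also a completion of every [(ω, d')]
    into which [(ω, d)] embeds densely isometrically.  A Cauchy-continuous map
    into a complete space extends continuously to the completion of its domain,
    so a Cauchy-continuous bijection with Cauchy-continuous inverse extends to a
    pair of continuous maps between the completions which are mutually inverse,
    being so on a dense set.  Conversely, given a homeomorphism [h : X0 -> X1],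
    enumerate without repetition a countable subset of [X0] containing the image
    of [ω] in [X0] and the preimage under [h] of the image of [ω] in [X1]; pulling
    back the metric of [X0] along this enumeration and that of [X1] along its
    composite with [h] gives [d0'] and [d1'], for which the identity of [ω] is
    Cauchy-continuous in both directions because continuous maps out of a
    complete space are Cauchy-continuous. *)

From Stdlib Require Import Reals Lra Lia Classical ClassicalEpsilon Wf_nat.
Open Scope R_scope.

Section NatEnumeration.

Variable P : nat -> Prop.
Hypothesis P_unbounded : forall k, exists m, (k <= m)%nat /\ P m.

Lemma least_from (k : nat) :
  exists m, (k <= m)%nat /\ P m /\ forall n, (k <= n)%nat -> P n -> (m <= n)%nat.
Proof.
  destruct (dec_inh_nat_subset_has_unique_least_element (fun m => (k <= m)%nat /\ P m))
    as [m [[[Hkm Hm] Hleast] _]].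
  - intro n; apply classic.
  - apply P_unbounded.
  - exists m; split; [exact Hkm | split; [exact Hm |]].
    intros n Hkn Hn; apply Hleast; split; assumption.
Qed.

Lemma nat_enumeration :
  exists e : nat -> nat, (forall n, P (e n)) /\
    (forall n n', e n = e n' -> n = n') /\ (forall m, P m -> exists n, e n = m).
Proof.
  destruct (choice _ least_from) as [first Hfirst].
  pose (e n := Nat.iter n (fun m => first (S m)) (first 0%nat)).
  assert (e_0 : e 0%nat = first 0%nat) by reflexivity.
  assert (e_S : forall n, e (S n) = first (S (e n))) by reflexivity.
  assert (e_incr : forall n, (e n < e (S n))%nat) by (intro n; rewrite e_S; apply Hfirst).
  assert (e_mono : forall n n', (n < n')%nat -> (e n < e n')%nat).
  { intros n n' Hn; induction Hn as [| n' _ IH]; [apply e_incr |].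
    specialize (e_incr n'); lia. }
  exists e; split; [| split].
  - intros [| n]; [rewrite e_0 | rewrite e_S]; apply Hfirst.
  - intros n n' E.
    destruct (Nat.lt_trichotomy n n') as [Hn | [Hn | Hn]]; [| exact Hn |];
      apply e_mono in Hn; lia.
  - intros m Hm.
    assert (Hbelow : forall n, (m < e n)%nat -> exists k, e k = m).
    { induction n as [| n IH]; intro Hlt.
      - pose proof (proj2 (proj2 (Hfirst 0%nat)) m (Nat.le_0_l m) Hm); lia.
      - destruct (Nat.lt_ge_cases m (e n)) as [Hmn | Hmn]; [exact (IH Hmn) |].
        destruct (Nat.eq_dec (e n) m) as [E | Hne]; [exists n; exact E |].
        rewrite e_S in Hlt.
        pose proof (proj2 (proj2 (Hfirst (S (e n)))) m ltac:(lia) Hm); lia. }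
    apply (Hbelow (S m)).
    assert (e_ge : forall n, (n <= e n)%nat).
    { induction n as [| n IH]; [lia | specialize (e_incr n); lia]. }
    specialize (e_ge (S m)); lia.
Qed.

End NatEnumeration.

Lemma injective_cover_of_union {X : Type} (a b : nat -> X) :
  (forall n n', a n = a n' -> n = n') -> (forall n n', b n = b n' -> n = n') ->
  exists psi : nat -> X, (forall k k', psi k = psi k' -> k = k') /\
    (forall n, exists k, psi k = a n) /\ (forall n, exists k, psi k = b n).
Proof.
  intros Ha Hb.
  pose (c m := if Nat.even m then a (Nat.div2 m) else b (Nat.div2 m)).
  assert (c_even : forall n, c (2 * n)%nat = a n).
  { intro n; unfold c; rewrite Nat.even_mul, Nat.div2_double; reflexivity. }
  assert (c_odd : forall n, c (S (2 * n)) = b n).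
  { intro n; unfold c; rewrite Nat.even_succ, Nat.odd_mul, Nat.div2_succ_double; reflexivity. }
  (* Odd indices are kept only for values of [b] missed by [a], so [c] is injective on [P]. *)
  pose (P m := (exists n, m = (2 * n)%nat) \/
               exists n, m = S (2 * n) /\ forall n', a n' <> b n).
  destruct (nat_enumeration P) as [e [He [He_inj He_onto]]].
  { intro k; exists (2 * k)%nat; split; [lia | left; exists k; reflexivity]. }
  assert (c_inj : forall m m', P m -> P m' -> c m = c m' -> m = m').
  { intros m m' [[n ->] | [n [-> Hn]]] [[n' ->] | [n' [-> Hn']]];
      rewrite ?c_even, ?c_odd; intro E.
    - rewrite (Ha _ _ E); reflexivity.
    - contradiction (Hn' n E).
    - contradiction (Hn n' (eq_sym E)).
    - rewrite (Hb _ _ E); reflexivity. }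
  assert (cover_a : forall n, exists k, c (e k) = a n).
  { intro n; destruct (He_onto (2 * n)%nat) as [k Hk]; [left; exists n; reflexivity |].
    exists k; rewrite Hk; apply c_even. }
  exists (fun k => c (e k)); split; [| split; [exact cover_a |]].
  - intros k k' E; apply He_inj, c_inj; auto.
  - intro n; destruct (classic (exists n', a n' = b n)) as [[n' Hn'] | Hnew].
    + destruct (cover_a n') as [k Hk]; exists k; rewrite Hk; exact Hn'.
    + destruct (He_onto (S (2 * n))) as [k Hk].
      { right; exists n; split; [reflexivity |]. intros n' E; apply Hnew; exists n'; exact E. }
      exists k; rewrite Hk; apply c_odd.
Qed.

Section MetricFacts.

Context {X : Type} (d : X -> X -> R) (Hd : is_metric d).

Lemma metric_nonneg x y : 0 <= d x y.
Proof. apply Hd. Qed.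

Lemma metric_refl x : d x x = 0.
Proof. apply Hd; reflexivity. Qed.

Lemma metric_sym x y : d x y = d y x.
Proof. apply Hd. Qed.

Lemma metric_triangle x y z : d x z <= d x y + d y z.
Proof. apply Hd. Qed.

Lemma metric_quadrilateral x y x' y' :
  d x y <= d x' y' + d x x' + d y y' /\ d x' y' <= d x y + d x x' + d y y'.
Proof.
  pose proof (metric_triangle x x' y); pose proof (metric_triangle x' y' y).
  pose proof (metric_triangle x' x y'); pose proof (metric_triangle x y y').
  rewrite (metric_sym y' y) in *; rewrite (metric_sym x' x) in *; lra.
Qed.

Lemma metric_eq_of_small x y : (forall eps, 0 < eps -> d x y < eps) -> x = y.
Proof.
  intro Hsmall; apply Hd, Rle_antisym; [| apply metric_nonneg].
  apply Rle_plus_epsilon; intros eps Heps; specialize (Hsmall eps Heps); lra.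
Qed.

Lemma converges_cauchy u x : seq_converges d u x -> cauchy_seq d u.
Proof.
  intros Hu eps Heps; destruct (Hu (eps / 2)) as [N HN]; [lra |].
  exists N; intros m n Hm Hn.
  pose proof (HN m Hm); pose proof (HN n Hn); pose proof (metric_triangle (u m) x (u n)).
  rewrite (metric_sym x (u n)) in *; lra.
Qed.

Lemma converges_of_inv_bound u x : (forall n, d (u n) x < / INR (S n)) -> seq_converges d u x.
Proof.
  intros Hu eps Heps; destruct (archimed_cor1 eps Heps) as [N [HN HN0]].
  exists N; intros n Hn.
  apply Rlt_le_trans with (/ INR (S n)); [apply Hu |].
  apply Rle_trans with (/ INR N); [| lra].
  apply Rinv_le_contravar; [apply lt_0_INR; lia | apply le_INR; lia].
Qed.

End MetricFacts.

Definition pullback_metric {A X : Type} (dX : X -> X -> R) (p : A -> X) : A -> A -> R :=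
  fun a b => dX (p a) (p b).

Lemma is_metric_pullback {A X : Type} (dX : X -> X -> R) (p : A -> X) :
  is_metric dX -> (forall a b, p a = p b -> a = b) -> is_metric (pullback_metric dX p).
Proof.
  intros HX Hp; unfold pullback_metric; repeat split.
  - intros; apply (metric_nonneg dX HX).
  - intro E; apply Hp, HX, E.
  - intros ->; apply (metric_refl dX HX).
  - intros; apply (metric_sym dX HX).
  - intros; apply (metric_triangle dX HX).
Qed.

Lemma isometry_injective {A B : Type} (dA : A -> A -> R) (dB : B -> B -> R) (f : A -> B) :
  is_metric dA -> is_metric dB -> isometry dA dB f -> forall a a', f a = f a' -> a = a'.
Proof.
  intros HA HB Hf a a' E; apply HA; rewrite <- Hf, E; apply (metric_refl dB HB).
Qed.

Lemma isometry_cauchy_seq_iff {A B : Type} (dA : A -> A -> R) (dB : B -> B -> R)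
  (f : A -> B) (u : nat -> A) :
  isometry dA dB f -> (cauchy_seq dB (fun n => f (u n)) <-> cauchy_seq dA u).
Proof. intro Hf; unfold cauchy_seq; setoid_rewrite Hf; reflexivity. Qed.

Lemma isometry_cauchy_continuous {A B : Type} (dA : A -> A -> R) (dB : B -> B -> R)
  (f : A -> B) : isometry dA dB f -> cauchy_continuous dA dB f.
Proof. intros Hf u; apply (isometry_cauchy_seq_iff dA dB f u Hf). Qed.

Lemma cauchy_continuous_comp {A B C : Type} (dA : A -> A -> R) (dB : B -> B -> R)
  (dC : C -> C -> R) (f : A -> B) (g : B -> C) :
  cauchy_continuous dA dB f -> cauchy_continuous dB dC g ->
  cauchy_continuous dA dC (fun a => g (f a)).
Proof. intros Hf Hg u Hu; exact (Hg _ (Hf u Hu)). Qed.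

Lemma metric_continuous_id {X : Type} (dX : X -> X -> R) :
  metric_continuous dX dX (fun x => x).
Proof. intros x eps Heps; exists eps; split; [exact Heps | tauto]. Qed.

Lemma metric_continuous_comp {A B C : Type} (dA : A -> A -> R) (dB : B -> B -> R)
  (dC : C -> C -> R) (f : A -> B) (g : B -> C) :
  metric_continuous dA dB f -> metric_continuous dB dC g ->
  metric_continuous dA dC (fun a => g (f a)).
Proof.
  intros Hf Hg x eps Heps; destruct (Hg (f x) eps Heps) as [eta [Heta Hgx]].
  destruct (Hf x eta Heta) as [delta [Hdelta Hfx]].
  exists delta; split; [exact Hdelta | intros y Hy; apply Hgx, Hfx, Hy].
Qed.

Lemma continuous_cauchy_continuous {A B : Type} (dA : A -> A -> R) (dB : B -> B -> R)
  (f : A -> B) :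
  is_metric dA -> is_metric dB -> complete_metric dA -> metric_continuous dA dB f ->
  cauchy_continuous dA dB f.
Proof.
  intros HA HB HA_complete Hf u Hu; destruct (HA_complete u Hu) as [x Hx].
  apply (converges_cauchy dB HB _ (f x)); intros eps Heps.
  destruct (Hf x eps Heps) as [delta [Hdelta Hfx]]; destruct (Hx delta Hdelta) as [N HN].
  exists N; intros n Hn; rewrite (metric_sym dB HB); apply Hfx.
  rewrite (metric_sym dA HA); apply HN, Hn.
Qed.

Lemma continuous_eq_on_dense {A X Y : Type} (dX : X -> X -> R) (dY : Y -> Y -> R)
  (j : A -> X) (F G : X -> Y) :
  is_metric dX -> is_metric dY -> dense_image dX j ->
  metric_continuous dX dY F -> metric_continuous dX dY G ->
  (forall a, F (j a) = G (j a)) -> forall x, F x = G x.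
Proof.
  intros HX HY Hj HF HG Hagree x; apply (metric_eq_of_small dY HY); intros eps Heps.
  destruct (HF x (eps / 2)) as [dF [HdF HFx]]; [lra |].
  destruct (HG x (eps / 2)) as [dG [HdG HGx]]; [lra |].
  destruct (Hj x (Rmin dF dG)) as [a Ha]; [apply Rmin_pos; assumption |].
  rewrite (metric_sym dX HX) in Ha.
  pose proof (Rmin_l dF dG); pose proof (Rmin_r dF dG).
  specialize (HFx (j a) ltac:(lra)); specialize (HGx (j a) ltac:(lra)).
  rewrite Hagree in HFx; pose proof (metric_triangle dY HY (F x) (G (j a)) (G x)).
  rewrite (metric_sym dY HY (G (j a))) in *; lra.
Qed.

Section Extension.

Variables (A X Y : Type) (dA : A -> A -> R) (dX : X -> X -> R) (dY : Y -> Y -> R).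
Variables (j : A -> X) (f : A -> Y).
Hypothesis HX : is_metric dX.
Hypothesis HY : is_metric dY.
Hypothesis HY_complete : complete_metric dY.
Hypothesis Hj : dense_isometry dA dX j.
Hypothesis Hf : cauchy_continuous dA dY f.

Definition limit_along (x : X) (L : Y) : Prop :=
  forall eps, 0 < eps -> exists delta, 0 < delta /\
    forall a, dX (j a) x < delta -> dY (f a) L < eps.

Lemma small_oscillation (x : X) (eps : R) : 0 < eps ->
  exists delta, 0 < delta /\ forall a b,
    dX (j a) x < delta -> dX (j b) x < delta -> dY (f a) (f b) < eps.
Proof.
  intro Heps; apply NNPP; intro Hbig.
  assert (Hpairs : forall k, exists p : A * A,
    dX (j (fst p)) x < / INR (S (S (2 * k))) /\ dX (j (snd p)) x < / INR (S (S (2 * k))) /\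
    eps <= dY (f (fst p)) (f (snd p))).
  { intro k; apply NNPP; intro Hno; apply Hbig.
    exists (/ INR (S (S (2 * k)))); split; [apply Rinv_0_lt_compat, lt_0_INR; lia |].
    intros a b Ha Hb; apply Rnot_le_lt; intro Hle; apply Hno; exists (a, b); auto. }
  destruct (choice _ Hpairs) as [p Hp].
  (* Interleaving the pairs gives a sequence converging to [x] whose image is not Cauchy. *)
  pose (c n := if Nat.even n then fst (p (Nat.div2 n)) else snd (p (Nat.div2 n))).
  assert (Hc : cauchy_seq dA c).
  { apply (isometry_cauchy_seq_iff dA dX j c (proj1 Hj)).
    apply (converges_cauchy dX HX _ x), converges_of_inv_bound; intro n.
    assert (Hn : / INR (S (S (2 * Nat.div2 n))) <= / INR (S n)).
    { apply Rinv_le_contravar; [apply lt_0_INR; lia | apply le_INR].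
      pose proof (Nat.div2_odd n); destruct (Nat.odd n); simpl in *; lia. }
    unfold c; destruct (Nat.even n); destruct (Hp (Nat.div2 n)) as [Hfst [Hsnd _]]; lra. }
  destruct (Hf c Hc eps Heps) as [N HN].
  specialize (HN (2 * N)%nat (S (2 * N)) ltac:(lia) ltac:(lia)).
  unfold c in HN.
  rewrite Nat.even_succ, Nat.odd_mul, Nat.even_mul, Nat.div2_double, Nat.div2_succ_double in HN.
  destruct (Hp N) as [_ [_ Hfar]]; simpl in HN; lra.
Qed.

Lemma limit_along_exists (x : X) : exists L, limit_along x L.
Proof.
  assert (Happrox : forall n, exists a, dX (j a) x < / INR (S n)).
  { intro n; apply (proj2 Hj), Rinv_0_lt_compat, lt_0_INR; lia. }
  destruct (choice _ Happrox) as [u Hu].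
  assert (Hju : seq_converges dX (fun n => j (u n)) x) by exact (converges_of_inv_bound dX _ x Hu).
  destruct (HY_complete (fun n => f (u n))) as [L HL].
  { apply Hf, (isometry_cauchy_seq_iff dA dX j u (proj1 Hj)).
    exact (converges_cauchy dX HX _ x Hju). }
  exists L; intros eps Heps.
  destruct (small_oscillation x (eps / 2)) as [delta [Hdelta Hosc]]; [lra |].
  exists delta; split; [exact Hdelta |]; intros a Ha.
  destruct (Hju delta Hdelta) as [N1 HN1]; destruct (HL (eps / 2)) as [N2 HN2]; [lra |].
  specialize (Hosc a (u (max N1 N2)) Ha (HN1 _ (Nat.le_max_l N1 N2))).
  specialize (HN2 _ (Nat.le_max_r N1 N2)).
  pose proof (metric_triangle dY HY (f a) (f (u (max N1 N2))) L); lra.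
Qed.

Section LimitAlong.

Variable F : X -> Y.
Hypothesis HF : forall x, limit_along x (F x).

Lemma limit_along_extends a : F (j a) = f a.
Proof.
  symmetry; apply (metric_eq_of_small dY HY); intros eps Heps.
  destruct (HF (j a) eps Heps) as [delta [Hdelta Hlim]].
  apply Hlim; rewrite (metric_refl dX HX); exact Hdelta.
Qed.

Lemma limit_along_approx z eps : 0 < eps ->
  exists a, dX (j a) z < eps /\ dY (F z) (f a) < eps.
Proof.
  intro Heps; destruct (HF z eps Heps) as [delta [Hdelta Hz]].
  destruct (proj2 Hj z (Rmin delta eps)) as [a Ha]; [apply Rmin_pos; assumption |].
  pose proof (Rmin_l delta eps); pose proof (Rmin_r delta eps).
  exists a; split; [lra |]; rewrite (metric_sym dY HY); apply Hz; lra.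
Qed.

Lemma limit_along_continuous : metric_continuous dX dY F.
Proof.
  intros x eps Heps; destruct (HF x (eps / 2)) as [delta [Hdelta Hx]]; [lra |].
  exists (delta / 2); split; [lra |]; intros y Hxy.
  destruct (HF y (eps / 2)) as [delta' [Hdelta' Hy]]; [lra |].
  destruct (proj2 Hj y (Rmin (delta / 2) delta')) as [a Ha]; [apply Rmin_pos; lra |].
  pose proof (Rmin_l (delta / 2) delta'); pose proof (Rmin_r (delta / 2) delta').
  pose proof (metric_triangle dX HX (j a) y x); rewrite (metric_sym dX HX y x) in *.
  specialize (Hx a ltac:(lra)); specialize (Hy a ltac:(lra)).
  pose proof (metric_triangle dY HY (F x) (f a) (F y)).
  rewrite (metric_sym dY HY (F x) (f a)) in *; lra.
Qed.

Lemma limit_along_isometry : isometry dA dY f -> isometry dX dY F.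
Proof.
  intros Hfi x y.
  apply Rle_antisym; apply Rle_plus_epsilon; intros eps Heps;
    destruct (limit_along_approx x (eps / 4)) as [a [Hax Hfa]]; try lra;
    destruct (limit_along_approx y (eps / 4)) as [b [Hby Hfb]]; try lra;
    pose proof (metric_quadrilateral dY HY (F x) (F y) (f a) (f b));
    pose proof (metric_quadrilateral dX HX (j a) (j b) x y);
    rewrite (Hfi a b) in *; rewrite (proj1 Hj a b) in *; lra.
Qed.

End LimitAlong.

Lemma cauchy_continuous_extension :
  exists F : X -> Y, (forall a, F (j a) = f a) /\ metric_continuous dX dY F.
Proof.
  destruct (choice _ limit_along_exists) as [F HF].
  exists F; split; [exact (limit_along_extends F HF) | exact (limit_along_continuous F HF)].
Qed.

Lemma isometry_extension :
  isometry dA dY f -> exists F : X -> Y, (forall a, F (j a) = f a) /\ isometry dX dY F.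
Proof.
  intro Hfi; destruct (choice _ limit_along_exists) as [F HF].
  exists F; split; [exact (limit_along_extends F HF) | exact (limit_along_isometry F HF Hfi)].
Qed.

End Extension.

Lemma completion_of_dense_superspace {A A' X : Type} (dA : A -> A -> R) (dA' : A' -> A' -> R)
  (dX : X -> X -> R) (i : A -> X) (iota : A -> A') :
  is_metric dA' -> dense_isometry dA dA' iota -> is_completion dA dX i ->
  exists j, is_completion dA' dX j.
Proof.
  intros HA' Hiota [HX [HX_complete [Hi Hi_dense]]].
  destruct (isometry_extension A A' X dA dA' dX iota i HA' HX HX_complete Hiota
              (isometry_cauchy_continuous dA dX i Hi) Hi) as [j [Hj_iota Hj]].
  exists j; split; [exact HX | split; [exact HX_complete | split; [exact Hj |]]].
  intros x eps Heps; destruct (Hi_dense x eps Heps) as [a Ha].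
  exists (iota a); rewrite Hj_iota; exact Ha.
Qed.

Lemma homeomorphic_completions {A B X Y : Type} (dA : A -> A -> R) (dB : B -> B -> R)
  (dX : X -> X -> R) (dY : Y -> Y -> R) (jA : A -> X) (jB : B -> Y) (g : A -> B) (g' : B -> A) :
  is_completion dA dX jA -> is_completion dB dY jB ->
  (forall a, g' (g a) = a) -> (forall b, g (g' b) = b) ->
  cauchy_continuous dA dB g -> cauchy_continuous dB dA g' -> homeomorphic dX dY.
Proof.
  intros [HX [HX_complete HjA]] [HY [HY_complete HjB]] Hg'g Hgg' Hg Hg'.
  destruct (cauchy_continuous_extension A X Y dA dX dY jA (fun a => jB (g a))
              HX HY HY_complete HjA
              (cauchy_continuous_comp dA dB dY g jB Hg (isometry_cauchy_continuous _ _ _ (proj1 HjB))))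
    as [F [HF_ext HF]].
  destruct (cauchy_continuous_extension B Y X dB dY dX jB (fun b => jA (g' b))
              HY HX HX_complete HjB
              (cauchy_continuous_comp dB dA dX g' jA Hg' (isometry_cauchy_continuous _ _ _ (proj1 HjA))))
    as [G [HG_ext HG]].
  exists F, G; split; [| split; [| split; assumption]].
  - apply (continuous_eq_on_dense dX dX jA (fun x => G (F x)) (fun x => x) HX HX (proj2 HjA)).
    + exact (metric_continuous_comp dX dY dX F G HF HG).
    + apply metric_continuous_id.
    + intro a; rewrite HF_ext, HG_ext, Hg'g; reflexivity.
  - apply (continuous_eq_on_dense dY dY jB (fun y => F (G y)) (fun y => y) HY HY (proj2 HjB)).
    + exact (metric_continuous_comp dY dX dY G F HG HF).
    + apply metric_continuous_id.
    + intro b; rewrite HG_ext, HF_ext, Hgg'; reflexivity.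
Qed.

Lemma di_le_pullback {X : Type} (d : nat -> nat -> R) (dX : X -> X -> R) (i psi : nat -> X) :
  dense_isometry d dX i -> (forall n, exists k, psi k = i n) ->
  di_le d (pullback_metric dX psi).
Proof.
  intros [Hi Hi_dense] Hcover; destruct (choice _ Hcover) as [iota Hiota].
  exists iota; split.
  - intros a b; unfold pullback_metric; rewrite !Hiota; apply Hi.
  - intros k eps Heps; destruct (Hi_dense (psi k) eps Heps) as [n Hn].
    exists n; unfold pullback_metric; rewrite Hiota; exact Hn.
Qed.

Lemma cauchy_continuous_pullback {X Y : Type} (dX : X -> X -> R) (dY : Y -> Y -> R)
  (f : X -> Y) (p : nat -> X) (q : nat -> Y) :
  cauchy_continuous dX dY f -> (forall n, f (p n) = q n) ->
  cauchy_continuous (pullback_metric dX p) (pullback_metric dY q) (fun n => n).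
Proof.
  intros Hf Hpq u Hu eps Heps; destruct (Hf (fun n => p (u n)) Hu eps Heps) as [N HN].
  exists N; intros m n Hm Hn; unfold pullback_metric; rewrite <- !Hpq; apply HN; assumption.
Qed.

Theorem theorem4p7 (d0 d1 : nat -> nat -> R)
  (Hd0 : is_metric d0) (Hd1 : is_metric d1)
  (X0 : Type) (dX0 : X0 -> X0 -> R) (i0 : nat -> X0)
  (X1 : Type) (dX1 : X1 -> X1 -> R) (i1 : nat -> X1)
  (Hc0 : is_completion d0 dX0 i0) (Hc1 : is_completion d1 dX1 i1) :
  homeomorphic dX0 dX1 <->
  exists d0' d1' : nat -> nat -> R,
    is_metric d0' /\ is_metric d1' /\ di_le d0 d0' /\ di_le d1 d1' /\
    exists (g ginv : nat -> nat),
      (forall n, ginv (g n) = n) /\ (forall n, g (ginv n) = n) /\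
      cauchy_continuous d0' d1' g /\ cauchy_continuous d1' d0' ginv.
Proof.
  pose proof Hc0 as [HX0 [HX0_complete Hi0]]; pose proof Hc1 as [HX1 [HX1_complete Hi1]].
  split.
  - intros (h & h' & Hh'h & Hhh' & Hh & Hh').
    destruct (injective_cover_of_union i0 (fun n => h' (i1 n))) as [psi [Hpsi [Hcov0 Hcov1]]].
    + exact (isometry_injective d0 dX0 i0 Hd0 HX0 (proj1 Hi0)).
    + intros n n' E; apply (isometry_injective d1 dX1 i1 Hd1 HX1 (proj1 Hi1)).
      rewrite <- (Hhh' (i1 n)), E; apply Hhh'.
    + assert (Hhpsi : forall k k', h (psi k) = h (psi k') -> k = k').
      { intros k k' E; apply Hpsi; rewrite <- (Hh'h (psi k)), E; apply Hh'h. }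
      exists (pullback_metric dX0 psi), (pullback_metric dX1 (fun k => h (psi k))).
      split; [exact (is_metric_pullback dX0 psi HX0 Hpsi) |].
      split; [exact (is_metric_pullback dX1 _ HX1 Hhpsi) |].
      split; [exact (di_le_pullback d0 dX0 i0 psi Hi0 Hcov0) |].
      split.
      * apply (di_le_pullback d1 dX1 i1 _ Hi1); intro n.
        destruct (Hcov1 n) as [k Hk]; exists k; rewrite Hk; apply Hhh'.
      * exists (fun n => n), (fun n => n); split; [reflexivity | split; [reflexivity | split]].
        -- apply (cauchy_continuous_pullback dX0 dX1 h); [| reflexivity].
           exact (continuous_cauchy_continuous dX0 dX1 h HX0 HX1 HX0_complete Hh).
        -- apply (cauchy_continuous_pullback dX1 dX0 h'); [| intro n; apply Hh'h].
           exact (continuous_cauchy_continuous dX1 dX0 h' HX1 HX0 HX1_complete Hh').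
  - intros (d0' & d1' & Hd0' & Hd1' & [iota0 Hiota0] & [iota1 Hiota1] & g & g' & Hg'g & Hgg' & Hg & Hg').
    destruct (completion_of_dense_superspace d0 d0' dX0 i0 iota0 Hd0' Hiota0 Hc0) as [j0 Hj0].
    destruct (completion_of_dense_superspace d1 d1' dX1 i1 iota1 Hd1' Hiota1 Hc1) as [j1 Hj1].
    exact (homeomorphic_completions d0' d1' dX0 dX1 j0 j1 g g' Hj0 Hj1 Hg'g Hgg' Hg Hg').
Qed.
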